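(* Every $1$-Sperner hypergraph ${\cal H}=(V,{\cal E})$ is equilizable, i.e., there exist a weight function $w:V\to\mathbb{Z}_{\ge0}$ and a threshold $t\in\mathbb{Z}_{\ge0}$ such that for every $X\subseteq V$, $\sum_{x\in X}w(x)=t$ if and only if $X\in{\cal E}$.
   Context: A hypergraph ${\cal H}=(V,{\cal E})$ consists of a finite vertex set $V$ and a set ${\cal E}$ of subsets of $V$. It is $1$-Sperner if every two distinct hyperedges $e,f$ satisfy $\min\{|e\setminus f|,|f\setminus e|\}=1$. *)

From mathcomp Require Import all_boot.
Set Implicit Arguments. Unset Strict Implicit. Unset Printing Implicit Defensive.

Definition one_Sperner (V : finType) (E : {set {set V}}) : Prop :=
  forall e f, e \in E -> f \in E -> e != f ->
    minn #|e :\: f| #|f :\: e| = 1.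

Definition equilizable (V : finType) (E : {set {set V}}) : Prop :=
  exists (w : V -> nat) (t : nat),
    forall X : {set V}, (\sum_(x in X) w x = t) <-> X \in E.

From mathcomp Require Import all_boot zify.
Set Implicit Arguments. Unset Strict Implicit. Unset Printing Implicit Defensive.

(* Induction on the vertex set U, proving more: the weights can be taken
   positive on U.  Call z good if e \ z is contained in f whenever e, f are
   hyperedges with z in e and z not in f.  A good vertex exists: if some pair
   has |e \ f| >= 2, take one with |e \ f| maximal; 1-Spernerness forces
   f \ e = {u}, and u is good.  Otherwise every vertex is good.  A good z lying
   in no hyperedge is removed and given weight t + 1.
   For a good z lying in some hyperedge, let V1 be the vertices of U - z lying
   in every hyperedge avoiding z, and V2 = U - z - V1.  The hyperedges through z
   are the z + Y with Y in the 1-Sperner family E1 on V1, the others are the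
   V1 + Y with Y in the 1-Sperner family E2 on V2.  Given equilizing weights
   (w1, t1) for E1 and (w2, t2) for E2, put S1 = w1(V1) and M = S1 + 1, and
   weigh V1 by w1, V2 by M * w2 and z by t - t1, where t = S1 + M * t2.  Since
   w1(X :&: V1) <= S1 < M, comparing base-M digits shows that X has weight t iff
   either z is in X, w2(X :&: V2) = 0 and w1(X :&: V1) = t1, or z is not in X,
   w1(X :&: V1) = S1 and w2(X :&: V2) = t2. *)

Section SetFacts.
Variable V : finType.
Implicit Types (A B : {set V}) (w : V -> nat).

Lemma setD_eq_set1 A B u :
  (A :\: B == [set u]) = [&& u \in A, u \notin B & A :\ u \subset B].
Proof.
apply/eqP/and3P => [AB | [uA uB AuB]].
  have : u \in A :\: B by rewrite AB set11.
  rewrite inE => /andP[-> ->]; split=> //; apply/subsetP => x /setD1P[xu xA].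
  by apply: contraT => xB; move: xu; rewrite -in_set1 -AB inE xB xA.
apply/setP => x; rewrite !inE; case: eqVneq => [->|xu]; first by rewrite uA uB.
by apply: contraNF xu => /andP[xB xA]; apply: contraR xB => xu; rewrite (subsetP AuB) // !inE xu.
Qed.

Lemma card_gt1_neq A u : 1 < #|A| -> exists2 w, w \in A & w != u.
Proof.
case/card_gt1P => x [y [xA yA xy]].
by case: (eqVneq x u) => [xu | ?]; [exists y; rewrite // -xu eq_sym | exists x].
Qed.

Lemma card_le1_set1 A u : #|A| <= 1 -> u \in A -> A = [set u].
Proof.
move=> A1 uA; have /cards1P[v Av] : #|A| == 1.
  by rewrite eqn_leq A1 card_gt0; apply/set0Pn; exists u.
by move: uA; rewrite Av inE => /eqP ->.
Qed.

Lemma card_setD_leq A B : #|A| <= #|B| -> #|A :\: B| <= #|B :\: A|.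
Proof. by have := cardsID B A; have := cardsID A B; rewrite setIC; lia. Qed.

Lemma card_leq_of_setD A B C :
  #|A :\: C| <= #|A :\: B| -> #|B :\: A| = #|C :\: A| -> #|B| <= #|C|.
Proof.
move: (cardsID B A) (cardsID A B) (cardsID C A) (cardsID A C).
by rewrite (setIC B) (setIC C); lia.
Qed.

Lemma sum_subset_split w A B :
  A \subset B -> \sum_(x in B) w x = \sum_(x in A) w x + \sum_(x in B :\: A) w x.
Proof. by move=> AB; rewrite (big_setID A) (setIidPr AB). Qed.

Lemma sum_subset_leq w A B : A \subset B -> \sum_(x in A) w x <= \sum_(x in B) w x.
Proof. by move=> AB; rewrite (sum_subset_split w AB) leq_addr. Qed.

Lemma sum_subset_eq w A B : A \subset B -> {in B, forall x, 0 < w x} ->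
  \sum_(x in A) w x = \sum_(x in B) w x -> A = B.
Proof.
move=> AB wB; rewrite (sum_subset_split w AB) -[LHS]addn0 => /eqP.
rewrite eqn_add2l eq_sym sum_nat_eq0 => /forall_inP w0.
apply/eqP; rewrite eqEsubset AB; apply/subsetP => x xB.
by apply: contraT => xA; have := wB x xB; rewrite lt0n w0 // inE xA xB.
Qed.

Lemma sum_indicator (X A : {set V}) (F : V -> nat) :
  \sum_(x in X) (x \in A) * F x = \sum_(x in X :&: A) F x.
Proof.
rewrite (big_setID A) /= [X in _ + X]big1 ?addn0 => [|x /setDP[_ /negbTE->] //].
by apply: eq_bigr => x /setIP[_ ->]; rewrite mul1n.
Qed.

Lemma sum_point (X : {set V}) z c :
  \sum_(x in X) (x == z) * c = (z \in X) * c.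
Proof.
rewrite (eq_bigr (fun x => (x \in [set z]) * c)) => [|x _]; last by rewrite inE.
rewrite sum_indicator; case: (boolP (z \in X)) => zX.
  by rewrite (setIidPr _) ?sub1set // big_set1 mul1n.
by rewrite big1 // => x /setIP[xX /set1P xz]; move: zX; rewrite -xz xX.
Qed.

End SetFacts.

Lemma eq_digits M a b c d : a < M -> b < M -> a + M * c = b + M * d -> a = b /\ c = d.
Proof.
move=> aM bM eq_ab; have a_eq_b : a = b.
  have := congr1 (modn^~ M) eq_ab; rewrite /= !(addnC _ (M * _)) !(mulnC M) !modnMDl.
  by rewrite !modn_small.
split=> //; move/eqP: eq_ab; rewrite a_eq_b eqn_add2l eqn_mul2l => /orP[/eqP M0 | /eqP //].
by move: aM; rewrite M0.
Qed.

Lemma addn_subn_eq a b t : b <= t -> a + (t - b) = t -> a = b.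
Proof. lia. Qed.


Section OneSperner.
Variables (V : finType) (E : {set {set V}}).
Hypothesis spE : one_Sperner E.
Implicit Types (A B Y e f g h : {set V}).

Lemma one_Sperner_subset_eq e f : e \in E -> f \in E -> e \subset f -> e = f.
Proof.
move=> eE fE ef; apply: contraTeq ef => /(spE eE fE) min1.
by rewrite -setD_eq0 -cards_eq0; lia.
Qed.

Lemma one_Sperner_card_setD e f : e \in E -> f \in E -> 1 < #|e :\: f| ->
  #|f :\: e| = 1.
Proof.
move=> eE fE ef2; have nef : e != f by apply: contraTneq ef2 => ->; rewrite setDv cards0.
by have := spE eE fE nef; lia.
Qed.

Lemma one_Sperner_card_setD_leq e f : e \in E -> f \in E -> e != f ->
  #|e| <= #|f| -> #|e :\: f| = 1.
Proof.
by move=> eE fE nef /card_setD_leq le_ef; have := spE eE fE nef; rewrite (minn_idPl le_ef).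
Qed.

Lemma one_Sperner_trace A B : [disjoint A & B] ->
  one_Sperner [set Y : {set V} | Y \subset B & A :|: Y \in E].
Proof.
move=> disAB Y1 Y2; rewrite !inE => /andP[Y1B Y1E] /andP[Y2B Y2E] nY12.
have setUD Y Y' : Y \subset B -> (A :|: Y) :\: (A :|: Y') = Y :\: Y'.
  move=> YB; apply/setP => x; rewrite !inE.
  by case: (boolP (x \in A)) => [xA | _]; rewrite ?(disjointFr (disjointWr YB disAB) xA) ?andbF.
rewrite -(setUD Y1 Y2) // -(setUD Y2 Y1) //; apply: spE => //.
apply: contraNneq nY12 => eqY; rewrite eqEsubset -!setD_eq0.
by rewrite -(setUD Y1 Y2) // -(setUD Y2 Y1) // eqY setDv eqxx.
Qed.

End OneSperner.

Definition good_vertex (V : finType) (E : {set {set V}}) (z : V) :=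
  forall e f, e \in E -> f \in E -> z \in e -> z \notin f -> e :\ z \subset f.

Section GoodVertex.
Variables (V : finType) (E : {set {set V}}).
Hypothesis spE : one_Sperner E.
Implicit Types (e f g h : {set V}).

Section FarthestPair.
Variables (e f : {set V}) (u : V).
Hypotheses (eE : e \in E) (fE : f \in E) (far_ef : 1 < #|e :\: f|).
Hypothesis max_ef : forall g h, g \in E -> h \in E -> #|g :\: h| <= #|e :\: f|.
Hypothesis fe_u : f :\: e == [set u].

Lemma farthest_pair_link g : g \in E -> u \in g -> g :\: e == [set u].
Proof.
move=> gE ug; move: (fe_u); rewrite setD_eq_set1 => /and3P[uf ue fu_e].
apply/eqP; apply: card_le1_set1; last by rewrite inE ue.
rewrite leqNgt; apply/negP => far_ge.
have /eqP := one_Sperner_card_setD spE gE eE far_ge.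
case/cards1P => v /eqP; rewrite setD_eq_set1 => /and3P[ve vg ev_g].
have in_g x : x \in e -> x != v -> x \in g.
  by move=> xe xv; rewrite (subsetP ev_g) // !inE xv.
case: (boolP (v \in f)) => vf.
  have [w wge wu] := card_gt1_neq u far_ge.
  move: wge; rewrite inE => /andP[we wg].
  have wf : w \notin f by apply: contraNN we => wf; rewrite (subsetP fu_e) // !inE wu.
  suff : #|e :\: f| < #|g :\: f| by rewrite ltnNge max_ef.
  apply: proper_card; apply/properP; split; last by exists w; rewrite !inE ?we ?wf ?wg.
  apply/subsetP => x /setDP[xe xf]; rewrite inE xf in_g //.
  by apply: contraNneq xf => ->.
have fg : f \subset g.
  apply/subsetP => x xf; case: (eqVneq x u) => [-> // | xu].
  have xe : x \in e by rewrite (subsetP fu_e) // !inE xu.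
  by rewrite in_g //; apply: contraNneq vf => <-.
move: far_ef; rewrite (one_Sperner_subset_eq spE fE gE fg).
by have /eqP/cards1P[v' ->] := one_Sperner_card_setD spE gE eE far_ge; rewrite cards1.
Qed.

Lemma farthest_pair_good : good_vertex E u.
Proof.
move=> g h gE hE ug uh; apply/subsetP => y /setD1P[yu yg]; apply: contraT => yh.
move: (fe_u); rewrite setD_eq_set1 => /and3P[uf ue fu_e].
move: (farthest_pair_link gE ug); rewrite setD_eq_set1 => /and3P[_ _ gu_e].
have in_e x : x \in g -> x != u -> x \in e by move=> xg xu; rewrite (subsetP gu_e) // !inE xu.
have far_gh : 1 < #|g :\: h|.
  by apply/card_gt1P; exists u, y; rewrite !inE uh ug yh yg eq_sym.
have /eqP/cards1P[u' /eqP] := one_Sperner_card_setD spE gE hE far_gh.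
rewrite setD_eq_set1 => /and3P[u'h u'g hu'_g].
have in_g x : x \in h -> x != u' -> x \in g by move=> xh xu'; rewrite (subsetP hu'_g) // !inE xu'.
have hu'_e x : x \in h -> x != u' -> x \in e.
  by move=> xh xu'; rewrite in_e ?in_g //; apply: contraNneq uh => <-.
have u'e : u' \notin e.
  apply: contraNN yh => u'e; suff -> : h = e by rewrite in_e.
  apply: (one_Sperner_subset_eq spE hE eE); apply/subsetP => x xh.
  by case: (eqVneq x u') => [-> | ]; last exact: hu'_e.
have he_u' : h :\: e == [set u'].
  by rewrite setD_eq_set1 u'h u'e; apply/subsetP => x /setD1P[xu' xh]; rewrite hu'_e.
have fh : #|f| <= #|h|.
  by apply: (card_leq_of_setD (max_ef eE hE)); rewrite (eqP fe_u) (eqP he_u') !cards1.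
have nfh : f != h by apply: contraNneq uh => <-.
have /card_le1_set1 fh_u : #|f :\: h| <= 1.
  by rewrite (one_Sperner_card_setD_leq spE fE hE nfh fh).
move: (fh_u u); rewrite !inE uf uh => /(_ isT)/eqP; rewrite setD_eq_set1 => /and3P[_ _ fu_h].
have fg : f \subset g.
  apply/subsetP => x xf; case: (eqVneq x u) => [-> // | xu].
  have xh : x \in h by rewrite (subsetP fu_h) // !inE xu.
  by rewrite in_g //; apply: contraNneq u'e => <-; rewrite (subsetP fu_e) // !inE xu.
move: yh; rewrite -(one_Sperner_subset_eq spE fE gE fg) in yg.
by rewrite (subsetP fu_h) // !inE yu.
Qed.

End FarthestPair.

Lemma exists_good_vertex (U : {set V}) z0 :
  (forall e, e \in E -> e \subset U) -> z0 \in U -> exists2 z, z \in U & good_vertex E z.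
Proof.
move=> EU z0U.
pose far (p : {set V} * {set V}) := [&& p.1 \in E, p.2 \in E & 1 < #|p.1 :\: p.2|].
case: (pickP far) => [p0 far_p0 | no_far]; last first.
  exists z0 => // e f eE fE z0e z0f; apply/subsetP => x /setD1P[xz0 xe].
  apply: contraT => xf; suff : far (e, f) by rewrite no_far.
  by rewrite /far /= eE fE; apply/card_gt1P; exists x, z0; rewrite !inE xe xf z0e z0f.
case: (arg_maxnP (fun p => #|p.1 :\: p.2|) far_p0) => -[e f] /and3P[/= eE fE far_ef] max_far.
have max_ef g h : g \in E -> h \in E -> #|g :\: h| <= #|e :\: f|.
  move=> gE hE; case: (leqP #|g :\: h| 1) => [le1 | far_gh].
    exact: leq_trans le1 (ltnW far_ef).
  by apply: (max_far (g, h)); rewrite /far /= gE hE.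
have /eqP/cards1P[u fe_u] := one_Sperner_card_setD spE eE fE far_ef.
have uf : u \in f by have := set11 u; rewrite -fe_u inE => /andP[].
exists u; first exact: (subsetP (EU f fE)).
by apply: (farthest_pair_good eE fE far_ef max_ef); rewrite fe_u.
Qed.

End GoodVertex.

Definition equilizable_on (V : finType) (E : {set {set V}}) (U : {set V}) :=
  exists (w : V -> nat) (t : nat), {in U, forall x, 0 < w x} /\
    forall X : {set V}, X \subset U -> (\sum_(x in X) w x = t <-> X \in E).

Section Equilizable.
Variables (V : finType) (E : {set {set V}}).

Lemma equilizable_on_set0 : equilizable_on E set0.
Proof.
exists (fun _ => 0), (set0 \notin E); split=> [x | X]; first by rewrite inE.
rewrite subset0 => /eqP ->; rewrite big_set0.
by case: (set0 \in E).
Qed.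

Lemma equilizable_on_setD1 (U : {set V}) z : z \in U -> (forall e, e \in E -> z \notin e) ->
  equilizable_on E (U :\ z) -> equilizable_on E U.
Proof.
move=> zU zE [w [t [w_pos eq_w]]].
exists (fun x => if x == z then t.+1 else w x), t; split.
  by move=> x xU; case: eqVneq => // xz; rewrite w_pos // !inE xz.
move=> X XU; case: (boolP (z \in X)) => zX.
  by rewrite (bigD1 z) //= eqxx; split=> [|/zE]; [lia | rewrite zX].
have XUz : X \subset U :\ z.
  by apply/subsetP => x xX; rewrite !inE (subsetP XU) // andbT; apply: contraNneq zX => <-.
rewrite -eq_w //; suff -> : \sum_(x in X) (if x == z then t.+1 else w x) = \sum_(x in X) w x by [].
by apply: eq_bigr => x xX; rewrite ifN //; apply: contraNneq zX => <-.
Qed.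

End Equilizable.

Section Glue.
Variables (V : finType) (E : {set {set V}}) (U V1 : {set V}) (z : V).
Hypotheses (spE : one_Sperner E) (V1U : V1 \subset U :\ z).
Hypothesis edge_z : forall e, e \in E -> z \in e -> e :\ z \subset V1.
Hypothesis edge_nz : forall e, e \in E -> z \notin e -> V1 \subset e.
Variable e0 : {set V}.
Hypotheses (e0E : e0 \in E) (z_e0 : z \in e0).

Local Notation V2 := (U :\ z :\: V1).

Lemma z_notin_V1 : z \notin V1.
Proof. by apply: contraTN V1U => zV1; apply/subsetPn; exists z; rewrite ?setD11. Qed.

Lemma setD1_split (X : {set V}) : X \subset U -> X :\ z = X :&: V1 :|: X :&: V2.
Proof.
move=> XU; rewrite -setIUr; have -> : V1 :|: V2 = U :\ z by rewrite -{2}(setID (U :\ z) V1) (setIidPr V1U).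
by rewrite setIDA (setIidPl XU).
Qed.

Section Weights.
Variables (w1 w2 : V -> nat) (t1 t2 : nat).
Hypotheses (w1_pos : {in V1, forall x, 0 < w1 x}) (w2_pos : {in V2, forall x, 0 < w2 x}).
Hypothesis eq_w1 : forall Y : {set V}, Y \subset V1 -> (\sum_(x in Y) w1 x = t1 <-> z |: Y \in E).
Hypothesis eq_w2 : forall Y : {set V}, Y \subset V2 -> (\sum_(x in Y) w2 x = t2 <-> V1 :|: Y \in E).

Local Notation S1 := (\sum_(x in V1) w1 x).
Local Notation M := S1.+1.
Local Notation t := (S1 + M * t2).

Let w x := (x \in V1) * w1 x + (x \in V2) * (M * w2 x) + (x == z) * (t - t1).

Lemma glue_sum (X : {set V}) : \sum_(x in X) w x =
  \sum_(x in X :&: V1) w1 x + M * \sum_(x in X :&: V2) w2 x + (z \in X) * (t - t1).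
Proof. by rewrite !big_split /= !sum_indicator sum_point big_distrr. Qed.

Lemma t1_le_S1 : t1 <= S1.
Proof.
have e0V1 := edge_z e0E z_e0.
by rewrite -((eq_w1 e0V1).2 _) ?setD1K // sum_subset_leq.
Qed.

Lemma t1_lt_t : t1 < t.
Proof.
case: (posnP t2) => [t2_0 | t2_gt0]; last first.
  by rewrite (leq_trans (leq_trans _ (leq_pmulr M t2_gt0))) ?leq_addl ?ltnS ?t1_le_S1.
(* Otherwise both V1 and z |: V1 would be hyperedges. *)
rewrite t2_0 muln0 addn0 ltn_neqAle t1_le_S1 andbT; apply/eqP => t1_S1.
have V1E : V1 \in E by rewrite -[V1]setU0 -(eq_w2 (sub0set _)) big_set0.
have e0V1 := edge_z e0E z_e0.
have e0z_V1 : e0 :\ z = V1.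
  by apply: (sum_subset_eq e0V1 w1_pos); rewrite -t1_S1 (eq_w1 e0V1) setD1K.
have V1_e0 : V1 = e0 by apply: (one_Sperner_subset_eq spE) => //; rewrite -e0z_V1 subD1set.
by move: z_notin_V1; rewrite V1_e0 z_e0.
Qed.

Lemma glue_pos : {in U, forall x, 0 < w x}.
Proof.
move=> x xU; rewrite /w !addn_gt0; case: (eqVneq x z) => [-> | xz].
  by rewrite mul1n subn_gt0 t1_lt_t orbT.
case: (boolP (x \in V1)) => xV1; first by rewrite mul1n w1_pos.
have xV2 : x \in V2 by rewrite !inE xV1 xz xU.
by rewrite xV2 /= mul1n muln_gt0 w2_pos.
Qed.

Lemma glue_sum_z (X : {set V}) : X \subset U -> z \in X -> \sum_(x in X) w x = t <-> X \in E.
Proof.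
move=> XU zX; rewrite glue_sum zX mul1n.
have sum1_le : \sum_(x in X :&: V1) w1 x < M by rewrite ltnS sum_subset_leq ?subsetIr.
have t1_lt_M : t1 < M by rewrite ltnS t1_le_S1.
split=> [/(addn_subn_eq (ltnW t1_lt_t)) sum_eq | XE].
  have [sum1_t1 sum2_0] : \sum_(x in X :&: V1) w1 x = t1 /\ \sum_(x in X :&: V2) w2 x = 0.
    by apply: (eq_digits sum1_le t1_lt_M); rewrite muln0 addn0.
  have XE1 := (eq_w1 (subsetIr X V1)).1 sum1_t1.
  have X2_0 : set0 = X :&: V2.
    by apply: (sum_subset_eq (w := w2) (sub0set _)) => [x /setIP[_ /w2_pos] //|]; rewrite big_set0.
  by rewrite -(setD1K zX) (setD1_split XU) -X2_0 setU0.
have XzV1 := edge_z XE zX.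
have X2_0 : X :&: V2 = set0.
  apply/setP => x; rewrite !inE; apply/negP => /and4P[xX xV1 xz _].
  by move: xV1; rewrite (subsetP XzV1) // !inE xz.
have X1_E : X :&: V1 = X :\ z by rewrite (setD1_split XU) X2_0 setU0.
rewrite X2_0 big_set0 muln0 addn0 X1_E.
by rewrite (eq_w1 XzV1).2 ?setD1K // subnKC // ltnW // t1_lt_t.
Qed.

Lemma glue_sum_nz (X : {set V}) : X \subset U -> z \notin X ->
  \sum_(x in X) w x = t <-> X \in E.
Proof.
move=> XU zX; rewrite glue_sum (negbTE zX) mul0n addn0.
have X_split : X = X :&: V1 :|: X :&: V2.
  by rewrite -(setD1_split XU); apply/esym/setDidPl; rewrite disjoint_sym disjoints1.
split=> [sum_eq | XE].
  have sum1_le : \sum_(x in X :&: V1) w1 x < M by rewrite ltnS sum_subset_leq ?subsetIr.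
  have [sum1_S1 /(eq_w2 (subsetIr X V2)) XE2] := eq_digits sum1_le (ltnSn S1) sum_eq.
  have X1_V1 : X :&: V1 = V1 by apply: (sum_subset_eq (subsetIr X V1) w1_pos).
  by rewrite X_split X1_V1.
have X1_V1 : X :&: V1 = V1 by apply/setIidPr/edge_nz.
by rewrite X1_V1 (eq_w2 (subsetIr X V2)).2 // -{1}X1_V1 -X_split.
Qed.

Lemma glue_weights : equilizable_on E U.
Proof.
exists w, t; split=> [|X XU]; first exact: glue_pos.
by case: (boolP (z \in X)) => zX; [apply: glue_sum_z | apply: glue_sum_nz].
Qed.

End Weights.

Lemma equilizable_on_glue :
    equilizable_on [set Y : {set V} | Y \subset V1 & z |: Y \in E] V1 ->
    equilizable_on [set Y : {set V} | Y \subset V2 & V1 :|: Y \in E] V2 ->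
  equilizable_on E U.
Proof.
move=> [w1 [t1 [w1_pos eq_w1]]] [w2 [t2 [w2_pos eq_w2]]].
apply: (glue_weights (t1 := t1) (t2 := t2) w1_pos w2_pos) => Y YV.
  by have := eq_w1 Y YV; rewrite inE YV.
by have := eq_w2 Y YV; rewrite inE YV.
Qed.

End Glue.

Definition core_avoiding (V : finType) (E : {set {set V}}) (U : {set V}) (z : V) :=
  [set x in U :\ z | [forall f in E, (z \notin f) ==> (x \in f)]].

Section CoreAvoiding.
Variables (V : finType) (E : {set {set V}}) (U : {set V}) (z : V).

Lemma core_avoiding_sub : core_avoiding E U z \subset U :\ z.
Proof. by apply/subsetP => x; rewrite inE => /andP[]. Qed.

Lemma core_avoiding_edge (f : {set V}) : f \in E -> z \notin f -> core_avoiding E U z \subset f.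
Proof.
move=> fE zf; apply/subsetP => x; rewrite inE => /andP[_ /forall_inP /(_ f fE)].
by rewrite zf.
Qed.

Lemma good_vertex_core_avoiding (e : {set V}) : good_vertex E z -> e \subset U -> e \in E -> z \in e ->
  e :\ z \subset core_avoiding E U z.
Proof.
move=> good_z eU eE ze; apply/subsetP => x /setD1P[xz xe].
rewrite !inE xz (subsetP eU) //=; apply/forall_inP => f fE; apply/implyP => zf.
by rewrite (subsetP (good_z e f eE fE ze zf)) // !inE xz.
Qed.

End CoreAvoiding.

Lemma one_Sperner_equilizable_on (V : finType) (E : {set {set V}}) (U : {set V}) :
  one_Sperner E -> (forall e, e \in E -> e \subset U) -> equilizable_on E U.
Proof.
have [n ltUn] := ubnP #|U|; elim: n => // n IH in U E ltUn *; move=> spE EU.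
case: (set_0Vmem U) => [-> | [z0 z0U]]; first exact: equilizable_on_set0.
have [z zU good_z] := exists_good_vertex spE EU z0U.
have ltUz : #|U :\ z| < n by move: ltUn; rewrite (cardsD1 z U) zU add1n ltnS.
have ltn_sub (A : {set V}) : A \subset U :\ z -> #|A| < n.
  by move=> AUz; apply: leq_ltn_trans (subset_leq_card AUz) ltUz.
case: (boolP [exists e in E, z \in e]) => [/exists_inP[e0 e0E z_e0] | /exists_inPn z_isolated].
  have V1U := core_avoiding_sub E U z.
  apply: (equilizable_on_glue spE V1U _ (@core_avoiding_edge _ _ _ _) e0E z_e0).
  - by move=> e eE; apply: good_vertex_core_avoiding (EU e eE) eE.
  - apply: IH; [exact: ltn_sub | | by move=> Y; rewrite inE => /andP[]].
    apply: one_Sperner_trace => //; rewrite disjoint_sym disjoints_subset.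
    by apply: subset_trans V1U _; rewrite setDE subsetIr.
  apply: IH; [exact/ltn_sub/subsetDl | | by move=> Y; rewrite inE => /andP[]].
  by apply: one_Sperner_trace => //; rewrite disjoint_sym disjoints_subset setDE subsetIr.
apply: (equilizable_on_setD1 zU z_isolated); apply: IH => [|//|e eE]; first exact: ltn_sub.
apply/subsetP => x xe; rewrite !inE (subsetP (EU e eE)) // andbT.
by apply: contraNneq (z_isolated e eE) => <-.
Qed.

Theorem proposition12 (V : finType) (E : {set {set V}}) :
  one_Sperner E -> equilizable E.
Proof.
move=> spE; have [w [t [_ eq_w]]] := one_Sperner_equilizable_on spE (fun e _ => subsetT e).
by exists w, t => X; apply: eq_w; apply: subsetT.
Qed.
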